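(* Let $G$ be a cyclically $4$-edge-connected cubic graph and let $e_1=ab$ and $e_2=cd$ be two independent (non-adjacent) edges of $G$. Let $t\ge 2$ and let $H$ be the cubic graph obtained from $t$ copies of $G-e_1-e_2$ by joining them cyclically. Then $H$ is cyclically $4$-edge-connected.
   Context: Graphs are finite, undirected, loopless, and may contain parallel edges. A cubic graph is cyclically $4$-edge-connected if it has no edge cut of size less than $4$ whose removal leaves at least two components each containing a cycle. Joining cyclically: take $t$ copies of $G-e_1-e_2$, and denote by $a_i,b_i,c_i,d_i$ the vertices corresponding to $a,b,c,d$ in the $i$-th copy; for $i=1,\dots,t-1$ add the edges $d_ia_{i+1}$ and $c_ib_{i+1}$, and add the edges $d_ta_1$ and $c_tb_1$. The resulting graph is cubic. *)

From mathcomp Require Import all_boot.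
Set Implicit Arguments. Unset Strict Implicit. Unset Printing Implicit Defensive.

Section Multigraph.
Variables (V E : finType) (src tgt : E -> V).

Definition loopless : Prop := forall e, src e != tgt e.

Definition incident (e : E) (v : V) : bool := (src e == v) || (tgt e == v).

(* every vertex is incident with exactly three edges (no loops) *)
Definition cubic : Prop := forall v, #|[set e | incident e v]| = 3.

Definition adj_minus (S : {set E}) : rel V := fun x y =>
  [exists e, (e \notin S) &&
     (((src e == x) && (tgt e == y)) || ((src e == y) && (tgt e == x)))].

(* the component of u in G - S contains a cycle: a nonempty edge set F of
   G - S inside that component in which every vertex has degree 0 or 2 *)
Definition comp_has_cycle (S : {set E}) (u : V) : Prop :=
  exists F : {set E},
    [/\ F != set0, [disjoint F & S],
        (forall e, e \in F -> connect (adj_minus S) u (src e)) &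
        (forall v, #|[set e in F | incident e v]| \in [:: 0; 2])].

Definition cyc4ec : Prop :=
  forall S : {set E}, #|S| < 4 ->
    ~ (exists u v : V, [/\ ~~ connect (adj_minus S) u v,
                           comp_has_cycle S u & comp_has_cycle S v]).
End Multigraph.

(* Vertices: V * 'I_t,
   (x, i) is the copy of x in the i-th copy.  Edges: copies of the edges
   of G other than e1, e2, plus for each i the edges d_i a_{i+1}
   (tag false) and c_i b_{i+1} (tag true), indices taken cyclically. *)
Definition join_E (E : finType) (e1 e2 : E) (t : nat) : finType :=
  ({e : E | (e != e1) && (e != e2)} * 'I_t + 'I_t * bool)%type.

Section Join.
Variables (V E : finType) (src tgt : E -> V) (e1 e2 : E) (a b c d : V) (t : nat).

Definition join_ends (x : join_E e1 e2 t) : (V * 'I_t) * (V * 'I_t) :=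
  match x with
  | inl (e, i) => ((src (val e), i), (tgt (val e), i))
  | inr (i, false) => ((d, i), (a, ordS i))
  | inr (i, true) => ((c, i), (b, ordS i))
  end.

Definition join_src (x : join_E e1 e2 t) : V * 'I_t := (join_ends x).1.
Definition join_tgt (x : join_E e1 e2 t) : V * 'I_t := (join_ends x).2.
End Join.

From mathcomp Require Import all_boot zify.
Set Implicit Arguments. Unset Strict Implicit. Unset Printing Implicit Defensive.

(* We prove more: in the joined graph H every edge cut with at most three
   edges has at most one vertex on one of its sides ([join_cut3_trivial]).
   Since the component of a vertex carrying a cycle has at least two
   vertices, this excludes the cuts forbidden by [cyc4ec].

   Two nontrivial slices, one nontrivial slice and a switch between an
      empty and a full copy, or two such switches, each produce four cut
      edges.  In the remaining case a single slice is nontrivial and the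
      other copies are all empty (or all full; then pass to the complement
      of Z); the cut of that slice in G embeds into the cut of Z, so
      [cut3_trivial] applies to it. *)

Lemma val_iter_ordS n (x : 'I_n) m : val (iter m (@ordS n) x) = (x + m) %% n.
Proof.
elim: m => [|m IH] /=; first by rewrite addn0 modn_small.
by rewrite -addn1 IH modnDml addn1 addnS.
Qed.

Lemma ordS_neq n (i : 'I_n) : 1 < n -> ordS i != i.
Proof.
move=> n_gt1; apply/eqP => /(congr1 val) /=.
have := ltn_ord i; case: (ltnP i.+1 n) => [i1_lt|i1_ge] i_lt.
  by rewrite modn_small //; lia.
have -> : i.+1 = n by lia.
by rewrite modnn; lia.
Qed.

Lemma ord_pred_neq n (i : 'I_n) : 1 < n -> ord_pred i != i.
Proof.
move=> n_gt1; apply/eqP => pred_i; have := ordS_neq (ord_pred i) n_gt1.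
by rewrite ord_predK pred_i eqxx.
Qed.

Lemma ordS_const n (T : eqType) (f : 'I_n -> T) k0 :
  (forall k, k != k0 -> f k = f (ordS k)) -> forall j, f j = f (ordS k0).
Proof.
move=> f_step j; have k0_lt := ltn_ord k0; have j_lt := ltn_ord j.
have iter_neq m : m.+1 < n -> iter m (@ordS n) (ordS k0) != k0.
  move=> m_lt; apply/eqP => /(congr1 val); rewrite val_iter_ordS /= modnDml.
  have [q r_eq] : exists q, k0.+1 + m = q * n + (k0.+1 + m) %% n.
    by exists ((k0.+1 + m) %/ n); rewrite -divn_eq.
  move=> mod_eq; rewrite mod_eq in r_eq; case: q r_eq => [|q]; lia.
have f_iter m : m < n -> f (iter m (@ordS n) (ordS k0)) = f (ordS k0).
  elim: m => [//|m IH] m_lt /=.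
  by rewrite -f_step ?IH //; [lia | apply: iter_neq; lia].
have -> : j = iter ((j + n - k0.+1) %% n) (@ordS n) (ordS k0).
  apply: val_inj; rewrite val_iter_ordS /= modnDml modnDmr.
  have -> : k0.+1 + (j + n - k0.+1) = j + n by lia.
  by rewrite modnDr modn_small.
by apply: f_iter; rewrite ltn_mod; lia.
Qed.

Lemma ordS_const_off n (T : eqType) (f : 'I_n -> T) i : 1 < n ->
  (forall k, k != i -> ordS k != i -> f k = f (ordS k)) ->
  forall j, j != i -> f j = f (ordS i).
Proof.
move=> n_gt1 f_step.
pose g j := if j == i then f (ordS i) else f j.
have g_step k : k != ord_pred i -> g k = g (ordS k).
  move=> k_ne; rewrite /g; case: (k =P i) => [->|/eqP k_i].
    by rewrite (negbTE (ordS_neq i n_gt1)).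
  case: (ordS k =P i) => [Sk_i|/eqP Sk_i]; last exact: f_step.
  by move: k_ne; rewrite -Sk_i ordSK eqxx.
by move=> j j_ne; have := ordS_const g_step j; rewrite ord_predK /g (negbTE j_ne) eqxx.
Qed.

Lemma sum_bool_card (T : finType) (A : {pred T}) (P : pred T) :
  \sum_(x in A) (P x : nat) = #|[set x in A | P x]|.
Proof.
rewrite -sum1_card [RHS]big_mkcond [LHS]big_mkcond /=; apply: eq_bigr => x _.
by rewrite !inE; case: (x \in A); case: (P x).
Qed.

Lemma sum_eq_mem (T : finType) (A : {pred T}) (y : T) :
  \sum_(x in A) (y == x : nat) = (y \in A).
Proof.
rewrite sum_bool_card; case: (boolP (y \in A)) => yA.
  suff -> : [set x in A | y == x] = [set y] by rewrite cards1.
  by apply/setP => x; rewrite !inE eq_sym; case: (x =P y) => [->|]; rewrite ?yA ?andbF.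
suff -> : [set x in A | y == x] = set0 by rewrite cards0.
by apply/setP => x; rewrite !inE; case: (y =P x) => [<-|]; rewrite ?andbF ?(negbTE yA).
Qed.

Lemma card4 (T : finType) (A : {set T}) x1 x2 x3 x4 : uniq [:: x1; x2; x3; x4] ->
  x1 \in A -> x2 \in A -> x3 \in A -> x4 \in A -> 3 < #|A|.
Proof.
move=> uniq4 x1A x2A x3A x4A.
have := subset_leq_card (A := [pred x | x \in [:: x1; x2; x3; x4]]) (B := A).
rewrite (card_uniqP uniq4); apply; apply/subsetP => x.
by rewrite !inE => /or4P [] /eqP ->.
Qed.

Section Multigraph.
Variables (V E : finType) (src tgt : E -> V).
Hypothesis loopless_G : loopless src tgt.

Definition deg (F : {set E}) x := #|[set e in F | incident src tgt e x]|.
Definition touched (F : {set E}) := [set x | [exists e in F, incident src tgt e x]].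
Definition cut (Y : {set V}) := [set e | (src e \in Y) != (tgt e \in Y)].
Definition inner (Y : {set V}) := [set e | (src e \in Y) && (tgt e \in Y)].
Definition cycle_edges (F : {set E}) :=
  F != set0 /\ forall x, deg F x \in [:: 0; 2].

(* Each edge has two distinct ends. *)
Lemma incident_count e x : (incident src tgt e x : nat) = (src e == x) + (tgt e == x).
Proof.
rewrite /incident; have := loopless_G e.
by case: (src e =P x) => [->|_]; case: (tgt e =P x) => [->|_]; rewrite ?eqxx.
Qed.

Lemma handshake (Y : {set V}) (F : {set E}) :
  \sum_(x in Y) deg F x = \sum_(e in F) ((src e \in Y) + (tgt e \in Y)).
Proof.
under eq_bigr do rewrite /deg -sum_bool_card.
rewrite exchange_big /=; apply: eq_bigr => e _.
by under eq_bigr do rewrite incident_count; rewrite big_split /= !sum_eq_mem.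
Qed.

Lemma touched_deg (F : {set E}) x : (x \in touched F) = (0 < deg F x).
Proof.
rewrite inE; apply/existsP/card_gt0P => [[e /andP [eF ex]]|[e]].
  by exists e; rewrite inE eF.
by rewrite inE; exists e.
Qed.

Lemma touchedS (F F' : {set E}) : F \subset F' -> touched F \subset touched F'.
Proof.
move=> sFF'; apply/subsetP => x; rewrite !inE => /existsP [e /andP [eF ex]].
by apply/existsP; exists e; rewrite (subsetP sFF').
Qed.

Lemma touched_src (F : {set E}) e : e \in F -> (src e \in touched F) && (tgt e \in touched F).
Proof.
by move=> eF; rewrite !inE; apply/andP; split; apply/existsP; exists e;
  rewrite eF /incident eqxx ?orbT.
Qed.

Lemma touched_handshake (F : {set E}) : \sum_(x in touched F) deg F x = 2 * #|F|.
Proof.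
rewrite handshake -sum1_card big_distrr /=; apply: eq_bigr => e eF.
by case/andP: (touched_src eF) => -> ->.
Qed.

Lemma leaf_removal (F : {set E}) x : deg F x = 1 ->
  exists2 e, e \in F & #|touched (F :\ e)| < #|touched F|.
Proof.
move=> /eqP /cards1P [e deg_e].
have : e \in [set e0 in F | incident src tgt e0 x] by rewrite deg_e set11.
rewrite inE => /andP [eF ex]; exists e => //.
have x_touched : x \in touched F by rewrite touched_deg /deg deg_e cards1.
suff sub : touched (F :\ e) \subset touched F :\ x.
  by have := subset_leq_card sub; rewrite (cardsD1 x (touched F)) x_touched; lia.
apply/subsetP => y y_touched; rewrite in_setD1 (subsetP (touchedS (subsetDl F [set e]))) //.
rewrite andbT; apply: contraTneq y_touched => ->; rewrite touched_deg /deg.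
suff -> : [set e0 in F :\ e | incident src tgt e0 x] = set0 by rewrite cards0.
apply/setP => f; rewrite !inE; apply/negP => /andP [/andP [fe fF] fx].
have : f \in [set e0 in F | incident src tgt e0 x] by rewrite inE fF.
by rewrite deg_e inE (negbTE fe).
Qed.

Lemma branch_dense (F : {set E}) v : (forall x, deg F x != 1) -> 3 <= deg F v ->
  #|touched F| < #|F|.
Proof.
move=> no_leaf deg_v.
have v_touched : v \in touched F by rewrite touched_deg; lia.
have low x : x \in touched F -> 2 + (v == x) <= deg F x.
  rewrite touched_deg; case: (v =P x) => [<-|_] //; have := no_leaf x; lia.
have : \sum_(x in touched F) (2 + (v == x)) <= \sum_(x in touched F) deg F x.
  exact: leq_sum.
by rewrite touched_handshake big_split /= sum_eq_mem v_touched sum_nat_const; lia.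
Qed.

(* An edge set with at least as many edges as touched vertices contains a
   cycle: removing the edge at a leaf, or any edge at a vertex of degree at
   least 3, keeps the edge set that dense, until every degree is 0 or 2. *)
Lemma cycle_of_dense (K : {set E}) : K != set0 -> #|touched K| <= #|K| ->
  exists2 C : {set E}, C \subset K & cycle_edges C.
Proof.
have [n] := ubnP #|K|; elim: n K => // n IH K size_K K_ne dense.
have shrink e : e \in K -> #|touched (K :\ e)| <= #|K :\ e| ->
    exists2 C : {set E}, C \subset K & cycle_edges C.
  move=> eK dense'; have K_card := cardsD1 e K; rewrite eK in K_card.
  have K'_ne : K :\ e != set0.
    apply: contraTneq dense => K'0; rewrite -ltnNge K_card K'0 cards0.
    by apply/card_gt1P; exists (src e), (tgt e); case/andP: (touched_src eK).
  have [|C sub C_cyc] := IH (K :\ e) _ K'_ne dense'; first by lia.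
  by exists C => //; apply: subset_trans sub (subsetDl _ _).
case: (pickP (fun x => deg K x == 1)) => [x /eqP leaf | no_leaf].
  have [e eK lt_touched] := leaf_removal leaf; apply: (shrink e eK).
  by rewrite (cardsD1 e K) eK in dense; lia.
case: (pickP (fun x => deg K x \notin [:: 0; 2])) => [v deg_v | all_02].
  have no_leaf' x : deg K x != 1 by rewrite no_leaf.
  have {}deg_v : 3 <= deg K v.
    by move: deg_v (no_leaf' v); rewrite !inE; case: (deg K v) => [|[|[|]]].
  have lt_dense := branch_dense no_leaf' deg_v.
  have /set0Pn [e] : [set e in K | incident src tgt e v] != set0.
    by rewrite -card_gt0 -/(deg K v); lia.
  rewrite inE => /andP [eK _].
  apply: (shrink e eK); have := subset_leq_card (touchedS (subsetDl K [set e])).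
  by rewrite (cardsD1 e K) eK in lt_dense *; lia.
by exists K => //; split => // x; have := all_02 x; move/negbFE.
Qed.

Lemma adj_minus_sym (S : {set E}) : symmetric (adj_minus src tgt S).
Proof.
move=> x y; apply/existsP/existsP => [] [e He]; exists e; move: He;
  by case/andP => -> /orP [] /andP [-> ->]; rewrite ?orbT.
Qed.

Lemma connect_edge (S : {set E}) e u : e \notin S ->
  connect (adj_minus src tgt S) u (src e) = connect (adj_minus src tgt S) u (tgt e).
Proof.
have adj_e : e \notin S -> adj_minus src tgt S (src e) (tgt e).
  by move=> eS; apply/existsP; exists e; rewrite eS !eqxx.
move=> eS; have st := adj_e eS.
have ts : adj_minus src tgt S (tgt e) (src e) by rewrite adj_minus_sym.
by apply/idP/idP => conn; apply: connect_trans conn (connect1 _).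
Qed.

(* A cycle avoiding S yields a cycle in the component of G - S containing
   any of its edges: keep the edges of the cycle lying in that component. *)
Lemma cycle_comp (S C : {set E}) e0 : cycle_edges C -> [disjoint C & S] ->
  e0 \in C -> comp_has_cycle src tgt S (src e0).
Proof.
move=> [_ C_deg] CS e0C.
have notS e : e \in C -> e \notin S by move=> eC; rewrite (disjointFr CS eC).
pose reach := connect (adj_minus src tgt S) (src e0).
have reach_edge e x : e \in C -> incident src tgt e x -> reach x = reach (src e).
  by move=> eC /orP [] /eqP <- //; rewrite /reach connect_edge // notS.
exists [set e in C | reach (src e)]; split.
- by apply/set0Pn; exists e0; rewrite inE e0C /reach connect0.
- by apply: disjointWl CS; apply/subsetP => e; rewrite inE => /andP [].
- by move=> e; rewrite inE => /andP [].
move=> x; case: (boolP (reach x)) => reach_x.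
  suff -> : [set e in [set e in C | reach (src e)] | incident src tgt e x] =
            [set e in C | incident src tgt e x] by apply: C_deg.
  apply/setP => e; rewrite !inE; case: (boolP (e \in C)) => //= eC.
  by case: (boolP (incident _ _ e x)) => ex; rewrite ?andbF // -(reach_edge e x) ?reach_x.
suff -> : [set e in [set e in C | reach (src e)] | incident src tgt e x] = set0.
  by rewrite cards0.
apply/setP => e; rewrite !inE; apply/negP => /andP [/andP [eC reach_e] ex].
by rewrite -(reach_edge e x) // (negbTE reach_x) in reach_e.
Qed.

Lemma cutC (Y : {set V}) : cut (~: Y) = cut Y.
Proof. by apply/setP => e; rewrite !inE; case: (src e \in Y); case: (tgt e \in Y). Qed.

Lemma cut_component (S : {set E}) u :
  cut [set w | connect (adj_minus src tgt S) u w] \subset S.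
Proof.
apply/subsetP => e; rewrite !inE; apply: contraR => eS.
by rewrite connect_edge.
Qed.

Lemma comp_cycle_two (S : {set E}) u : comp_has_cycle src tgt S u ->
  1 < #|[set w | connect (adj_minus src tgt S) u w]|.
Proof.
case=> C [/set0Pn [e eC] CS C_comp _]; have eS : e \notin S by rewrite (disjointFr CS eC).
apply/card_gt1P; exists (src e), (tgt e); rewrite !inE -connect_edge //.
by rewrite C_comp.
Qed.

Hypothesis cubic_G : cubic src tgt.

(* Counting edge ends in Y: each inner edge has two, each cut edge one. *)
Lemma cut_inner_count (Y : {set V}) : 3 * #|Y| = 2 * #|inner Y| + #|cut Y|.
Proof.
have -> : 3 * #|Y| = \sum_(x in Y) deg [set: E] x.
  rewrite -sum1_card big_distrr /=; apply: eq_bigr => x _.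
  by rewrite muln1 -(cubic_G x); apply: eq_card => e; rewrite !inE.
rewrite handshake; under eq_bigr => e _ do
  have -> : (src e \in Y) + (tgt e \in Y) =
    2 * ((src e \in Y) && (tgt e \in Y)) + ((src e \in Y) != (tgt e \in Y))
    by case: (src e \in Y); case: (tgt e \in Y).
rewrite big_split /= -big_distrr /= !sum_bool_card.
by congr (2 * _ + _); apply: eq_card => e; rewrite !inE.
Qed.

(* A side of a cut of size at most 3 with two vertices spans a cycle: by
   [cut_inner_count] it has at least as many inner edges as vertices. *)
Lemma inner_cycle (Y : {set V}) : #|cut Y| <= 3 -> 1 < #|Y| ->
  exists2 C : {set E}, C \subset inner Y & cycle_edges C.
Proof.
move=> cut_Y Y_gt1; have count := cut_inner_count Y.
have touched_Y : #|touched (inner Y)| <= #|Y|.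
  apply/subset_leq_card/subsetP => x; rewrite inE => /existsP [e /andP].
  by rewrite inE => -[/andP [sY tY] /orP [] /eqP <-].
apply: cycle_of_dense; last by lia.
by rewrite -card_gt0; lia.
Qed.

Hypothesis cyc4ec_G : cyc4ec src tgt.

Lemma cut3_trivial (Y : {set V}) : #|cut Y| <= 3 -> #|Y| <= 1 \/ #|~: Y| <= 1.
Proof.
move=> cut_Y; case: (leqP #|Y| 1) => [|Y_gt1]; first by left.
case: (leqP #|~: Y| 1) => [|Yc_gt1]; first by right.
have cut_Yc : #|cut (~: Y)| <= 3 by rewrite cutC.
have [C1 C1_in [C1_ne C1_deg]] := inner_cycle cut_Y Y_gt1.
have [C2 C2_in [C2_ne C2_deg]] := inner_cycle cut_Yc Yc_gt1.
have /set0Pn [f1 f1C] := C1_ne; have /set0Pn [f2 f2C] := C2_ne.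
have inner_disj (Z : {set V}) (C : {set E}) : C \subset inner Z -> [disjoint C & cut Z].
  move=> CZ; rewrite disjoint_subset; apply/subsetP => e eC.
  by have := subsetP CZ e eC; rewrite !inE => /andP [-> ->].
have Y_closed : closed (adj_minus src tgt (cut Y)) (mem Y).
  move=> x y /existsP [e /andP [eY xy]]; move: eY; rewrite !inE negbK => /eqP eY.
  by case/orP: xy => /andP [/eqP <- /eqP <-].
exfalso; apply: (cyc4ec_G (S := cut Y)); first by lia.
exists (src f1), (src f2); split.
- apply/negP => /(closed_connect Y_closed).
  have := subsetP C1_in f1 f1C; rewrite inE => /andP [-> _].
  by have := subsetP C2_in f2 f2C; rewrite !inE => /andP [/negbTE -> _].
- exact: (cycle_comp (conj C1_ne C1_deg) (inner_disj _ _ C1_in) f1C).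
- by apply: (cycle_comp (conj C2_ne C2_deg) _ f2C); rewrite -cutC inner_disj.
Qed.
End Multigraph.

Section Join.
Variables (V E : finType) (src tgt : E -> V) (e1 e2 : E) (a b c d : V) (t : nat).
Hypothesis loopless_G : loopless src tgt.
Hypothesis cubic_G : cubic src tgt.
Hypothesis cyc4ec_G : cyc4ec src tgt.
Hypothesis ends_e1 : (src e1 = a /\ tgt e1 = b) \/ (src e1 = b /\ tgt e1 = a).
Hypothesis ends_e2 : (src e2 = c /\ tgt e2 = d) \/ (src e2 = d /\ tgt e2 = c).
Hypothesis abcd_uniq : uniq [:: a; b; c; d].
Hypothesis t_gt1 : 1 < t.

Local Notation cutG := (cut src tgt).
Local Notation proper_edge := {e : E | (e != e1) && (e != e2)}.
Local Notation HV := (V * 'I_t)%type.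
Local Notation HE := (join_E e1 e2 t).
Local Notation hsrc := (@join_src V E src tgt e1 e2 a b c d t).
Local Notation htgt := (@join_tgt V E src tgt e1 e2 a b c d t).
Local Notation cutH := (cut hsrc htgt).

Definition slice (Z : {set HV}) i := [set x | (x, i) \in Z].
Definition nontrivial (Y : {set V}) := (Y != set0) && (Y != setT).
Definition full (Z : {set HV}) i := slice Z i == setT.

Lemma cross_distinct : [&& a != c, a != d, b != c & b != d].
Proof. by move: abcd_uniq; rewrite /= !inE !negb_or => /and4P [/and3P [_ -> ->] /andP [-> ->]]. Qed.

Lemma ends_disjoint x : incident src tgt e1 x -> incident src tgt e2 x -> False.
Proof.
case/and4P: cross_distinct => ac ad bc bd.
rewrite /incident; case: ends_e1 => -[-> ->]; case: ends_e2 => -[-> ->];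
  by case/orP => /eqP <- /orP [] /eqP eq; move: ac ad bc bd; rewrite eq eqxx.
Qed.

(* A nontrivial vertex set of G is left by at least two edges other than
   e1 and e2: either its cut has 4 edges, or by [cut3_trivial] it isolates a
   vertex, whose three edges include at most one of e1, e2. *)
Lemma two_proper_cut_edges (Y : {set V}) : nontrivial Y ->
  exists x y : proper_edge, [/\ x != y, val x \in cutG Y & val y \in cutG Y].
Proof.
case/andP=> Y_ne Y_nT; suff : 1 < #|cutG Y :\ e1 :\ e2|.
  case/card_gt1P => x [y []]; rewrite !inE => /and3P [x2 x1 xY] /and3P [y2 y1 yY] xy.
  exists (Sub x (introT andP (conj x1 x2))), (Sub y (introT andP (conj y1 y2))).
  by rewrite -(inj_eq val_inj) !SubK xy !inE xY yY.
have card_e1 := cardsD1 e1 (cutG Y); have card_e2 := cardsD1 e2 (cutG Y :\ e1).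
case: (leqP 4 #|cutG Y|) => cut_Y.
  by move: card_e1 card_e2; case: (e1 \in _); case: (e2 \in _); lia.
have [Z [cut_Z Z_ne Z_le1]] : exists Z, [/\ cutG Z = cutG Y, Z != set0 & #|Z| <= 1].
  case: (cut3_trivial loopless_G cubic_G cyc4ec_G (Y := Y)) => [|Y1|Yc1]; first by lia.
    by exists Y.
  by exists (~: Y); rewrite cutC -setCT (inj_eq (@setC_inj _)).
have /cards1P [x0 Z_x0] : #|Z| == 1 by move: Z_ne; rewrite -card_gt0; lia.
set B := [set e | incident src tgt e x0].
have B_cut : B :\ e1 :\ e2 \subset cutG Y :\ e1 :\ e2.
  apply/setSD/setSD/subsetP => e; rewrite -cut_Z Z_x0 !inE /incident.
  by have := loopless_G e; case: (src e =P x0) => [->|_]; case: (tgt e =P x0) => [->|_]; rewrite ?eqxx.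
have := subset_leq_card B_cut; have := cubic_G x0; rewrite -/B => B3.
have := cardsD1 e1 B; have := cardsD1 e2 (B :\ e1); rewrite !inE.
case: (boolP (incident _ _ e1 x0)) => i1; case: (boolP (incident _ _ e2 x0)) => i2 //=.
- by have := ends_disjoint i1 i2.
all: lia.
Qed.

Lemma cutH_copy Z (e : proper_edge) i :
  ((inl (e, i) : HE) \in cutH Z) = (val e \in cutG (slice Z i)).
Proof. by rewrite !inE. Qed.
Lemma cutH_da Z k :
  ((inr (k, false) : HE) \in cutH Z) = ((d \in slice Z k) != (a \in slice Z (ordS k))).
Proof. by rewrite !inE. Qed.
Lemma cutH_cb Z k :
  ((inr (k, true) : HE) \in cutH Z) = ((c \in slice Z k) != (b \in slice Z (ordS k))).
Proof. by rewrite !inE. Qed.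

Lemma slice_setC Z i : slice (~: Z) i = ~: slice Z i.
Proof. by apply/setP => x; rewrite !inE. Qed.

Lemma trivial_mem (Y : {set V}) x : ~~ nontrivial Y -> (x \in Y) = (Y == setT).
Proof.
rewrite negb_and !negbK => /orP [] /eqP ->; rewrite ?inE ?eqxx //.
by apply/esym/eqP => /setP /(_ x); rewrite !inE.
Qed.

Lemma cut_nontrivial_join Z i k : nontrivial (slice Z i) ->
  (inr (k, false) : HE) \in cutH Z -> (inr (k, true) : HE) \in cutH Z ->
  3 < #|cutH Z|.
Proof.
move=> /two_proper_cut_edges [x [y [xy xY yY]]] da cb.
apply: (@card4 _ _ (inl (x, i)) (inl (y, i)) (inr (k, false)) (inr (k, true)));
  rewrite ?cutH_copy //.
by rewrite /= !inE -!sum_eqE /= !xpair_eqE !eqxx (negbTE xy).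
Qed.

(* Two nontrivial slices contribute two cut edges each. *)
Lemma cut_two_nontrivial Z i j : i != j ->
  nontrivial (slice Z i) -> nontrivial (slice Z j) -> 3 < #|cutH Z|.
Proof.
move=> ij /two_proper_cut_edges [x [y [xy xY yY]]] /two_proper_cut_edges [x' [y' [xy' xY' yY']]].
apply: (@card4 _ _ (inl (x, i)) (inl (y, i)) (inl (x', j)) (inl (y', j)));
  rewrite ?cutH_copy //.
rewrite /= !inE -!sum_eqE /= !xpair_eqE !(eq_sym j) (negbTE ij) !andbF !eqxx.
by rewrite (negbTE xy) (negbTE xy').
Qed.

Lemma cut_full_change Z k :
  ~~ nontrivial (slice Z k) -> ~~ nontrivial (slice Z (ordS k)) -> full Z k != full Z (ordS k) ->
  ((inr (k, false) : HE) \in cutH Z) && ((inr (k, true) : HE) \in cutH Z).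
Proof.
move=> triv_k triv_Sk; rewrite cutH_da cutH_cb !(trivial_mem _ triv_k) !(trivial_mem _ triv_Sk).
by rewrite /full => ->.
Qed.

(* If every slice is trivial but Z is not, the pattern of full copies
   changes at least twice around the cycle of copies. *)
Lemma cut_all_trivial Z : (forall i, ~~ nontrivial (slice Z i)) ->
  Z != set0 -> ~: Z != set0 -> 3 < #|cutH Z|.
Proof.
move=> triv /set0Pn [[x i] xZ] /set0Pn [[y j] yZ].
have full_i : full Z i by rewrite /full -(trivial_mem x (triv i)) inE.
have nfull_j : ~~ full Z j by rewrite /full -(trivial_mem y (triv j)) inE; rewrite inE in yZ.
have change k0 : exists2 k, k != k0 & full Z k != full Z (ordS k).
  apply/exists_inP; apply: contraFT (negbTE nfull_j); rewrite negb_exists_in => /forall_inP const.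
  have step k : k != k0 -> full Z k = full Z (ordS k).
    by move=> kk0; have := const k kk0; rewrite negbK => /eqP.
  by rewrite (ordS_const step j) -(ordS_const step i).
have [k0 _ change_k0] := change i; have [k1 k10 change_k1] := change k0.
have /andP [da0 cb0] := cut_full_change (triv _) (triv _) change_k0.
have /andP [da1 cb1] := cut_full_change (triv _) (triv _) change_k1.
apply: (@card4 _ _ (inr (k0, false)) (inr (k0, true)) (inr (k1, false)) (inr (k1, true))) => //.
by rewrite /= !inE -!sum_eqE /= !xpair_eqE !(eq_sym k0) (negbTE k10) !andbF.
Qed.

(* When the copies next to copy i are disjoint from Z, every edge of G
   leaving the slice Y of Z in copy i lifts to an edge of H leaving Z: a
   proper edge to its i-th copy, e1 = ab to the joining edge ending at
   whichever of a_i, b_i lies in Z, and e2 = cd likewise to the joining edge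
   starting at c_i or d_i. *)
Definition lift_edge Z i (e : E) : HE :=
  match insub e with
  | Some s => inl (s, i)
  | None =>
      if e == e1 then inr (ord_pred i, a \notin slice Z i)
      else inr (i, d \notin slice Z i)
  end.

Definition edge_of_copy i (x : HE) : E :=
  match x with
  | inl (s, _) => val s
  | inr (j, _) => if j == i then e2 else e1
  end.

Lemma lift_edgeK Z i : cancel (lift_edge Z i) (edge_of_copy i).
Proof.
move=> e; rewrite /lift_edge; case: insubP => [s _ <- //|].
rewrite negb_and !negbK; case: (e =P e1) => [-> _|_ /= /eqP ->]; rewrite /= ?eqxx //.
by rewrite (negbTE (ord_pred_neq i t_gt1)).
Qed.

Lemma lift_edge_cut Z i e : slice Z (ord_pred i) = set0 -> slice Z (ordS i) = set0 ->
  e \in cutG (slice Z i) -> lift_edge Z i e \in cutH Z.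
Proof.
move=> pred_empty succ_empty; rewrite /lift_edge; case: insubP => [s _ <-|].
  by rewrite cutH_copy.
rewrite negb_and !negbK; case: (e =P e1) => [-> _|_ /= /eqP ->].
  rewrite in_set; case: ends_e1 => -[-> ->]; case: (boolP (a \in _)) => a_in;
    by rewrite /= ?cutH_da ?cutH_cb ord_predK pred_empty in_set0 ?a_in //; case: (b \in _).
rewrite in_set; case: ends_e2 => -[-> ->]; case: (boolP (d \in _)) => d_in;
  by rewrite /= ?cutH_da ?cutH_cb succ_empty in_set0 ?d_in //; case: (c \in _).
Qed.

Lemma cosmall_ends (Y : {set V}) : #|~: Y| <= 1 ->
  ((a \in Y) && (b \in Y)) || ((c \in Y) && (d \in Y)).
Proof.
move=> Yc1; apply/negPn/negP; rewrite negb_or !negb_and => /andP [ab cd].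
have two_out x y : x \notin Y -> y \notin Y -> x != y -> False.
  move=> xY yY xy; suff : 1 < #|~: Y| by lia.
  by apply/card_gt1P; exists x, y; rewrite !inE.
case/and4P: cross_distinct => ac ad bc bd.
case/orP: ab => [aY|bY]; case/orP: cd => [cY|dY].
- exact: (two_out a c).
- exact: (two_out a d).
- exact: (two_out b c).
- exact: (two_out b d).
Qed.

(* If Z meets only copy i, its slice Y there has a cut of size at most 3 in
   G by [lift_edge_cut]; so Y is a single vertex, or Y misses at most one
   vertex and then both joining edges on one side of copy i are cut. *)
Lemma cut_one_slice Z i : nontrivial (slice Z i) -> (forall j, j != i -> slice Z j = set0) ->
  #|cutH Z| <= 3 -> #|Z| <= 1.
Proof.
move=> Y_ntr others cut_Z; set Y := slice Z i in Y_ntr *.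
have pred_empty := others _ (ord_pred_neq i t_gt1).
have succ_empty := others _ (ordS_neq i t_gt1).
have cut_Y : #|cutG Y| <= 3.
  rewrite -(card_imset _ (can_inj (lift_edgeK Z i))); apply: leq_trans cut_Z.
  apply/subset_leq_card/subsetP => x /imsetP [e eY ->].
  exact: lift_edge_cut.
case: (cut3_trivial loopless_G cubic_G cyc4ec_G cut_Y) => [Y1|Yc1].
  suff Z_sub : Z \subset [set (x, i) | x in Y].
    by apply: leq_trans (subset_leq_card Z_sub) (leq_trans (leq_imset_card _ _) Y1).
  apply/subsetP => -[x j] xZ; have ji : j = i.
    by apply/eqP; apply: contraTT xZ => ji; have /setP /(_ x) := others j ji; rewrite !inE => ->.
  by subst j; apply/imsetP; exists x; rewrite // /Y inE.
case/orP: (cosmall_ends Yc1) => /andP [aY bY]; exfalso.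
  have := @cut_nontrivial_join Z i (ord_pred i) Y_ntr.
  by rewrite cutH_da cutH_cb ord_predK pred_empty !in_set0 aY bY => /(_ isT isT); lia.
have := @cut_nontrivial_join Z i i Y_ntr.
by rewrite cutH_da cutH_cb succ_empty !in_set0 aY bY => /(_ isT isT); lia.
Qed.

(* With a single nontrivial slice i, the other copies are all empty or all
   full (a change would cut two joining edges besides the slice's two cut
   edges), and [cut_one_slice] applies to Z or to its complement. *)
Lemma cut_one_nontrivial Z i : nontrivial (slice Z i) ->
  (forall j, j != i -> ~~ nontrivial (slice Z j)) ->
  #|cutH Z| <= 3 -> #|Z| <= 1 \/ #|~: Z| <= 1.
Proof.
move=> ntr_i triv cut_Z.
have step k : k != i -> ordS k != i -> full Z k = full Z (ordS k).
  move=> ki Ski; case: (full Z k =P full Z (ordS k)) => // /eqP change; exfalso.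
  have /andP [da cb] := cut_full_change (triv k ki) (triv _ Ski) change.
  by have := cut_nontrivial_join ntr_i da cb; lia.
have slice_j j : j != i -> slice Z j = if full Z (ordS i) then setT else set0.
  move=> ji; have := triv j ji; rewrite -(ordS_const_off t_gt1 step ji) /full.
  have set0_nT : set0 != [set: V] by apply/eqP => /setP /(_ a); rewrite !inE.
  by rewrite negb_and !negbK => /orP [] /eqP ->; rewrite ?eqxx ?(negbTE set0_nT).
case: (boolP (full Z (ordS i))) => full_Si; [right | left].
  apply: (@cut_one_slice (~: Z) i); rewrite ?cutC ?slice_setC //.
    have eqC (A B : {set V}) : (~: A == B) = (A == ~: B).
      by rewrite -(inj_eq (@setC_inj _)) setCK.
    by rewrite /nontrivial !eqC setC0 setCT andbC.
  by move=> j ji; rewrite slice_setC slice_j // full_Si setCT.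
by apply: (cut_one_slice ntr_i) => // j ji; rewrite slice_j // (negbTE full_Si).
Qed.

Lemma join_cut3_trivial Z : #|cutH Z| <= 3 -> #|Z| <= 1 \/ #|~: Z| <= 1.
Proof.
move=> cut_Z; case: (pickP (fun i => nontrivial (slice Z i))) => [i ntr_i | triv].
  case: (pickP (fun j => (j != i) && nontrivial (slice Z j))) => [j /andP [ji ntr_j] | one].
    by have := cut_two_nontrivial ji ntr_j ntr_i; lia.
  apply: cut_one_nontrivial ntr_i _ cut_Z => j ji.
  by have := one j; rewrite ji /= => ->.
have all_triv i : ~~ nontrivial (slice Z i) by rewrite triv.
case: (leqP #|Z| 1) => [|Z_gt1]; [by left | right].
rewrite leqNgt; apply/negP => Zc_gt1.
have Z_ne : Z != set0 by rewrite -card_gt0; lia.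
have Zc_ne : ~: Z != set0 by rewrite -card_gt0; lia.
by have := cut_all_trivial all_triv Z_ne Zc_ne; lia.
Qed.

Lemma join_loopless : loopless hsrc htgt.
Proof.
case/and4P: cross_distinct => _ ad bc _.
case=> [[s i]|[i []]]; rewrite /join_src /join_tgt /= xpair_eqE negb_and.
- by rewrite loopless_G.
- by rewrite eq_sym bc.
- by rewrite eq_sym ad.
Qed.
End Join.

(* The component X of u in H - S has at least two vertices, so does the
   component of v, which lies outside X, and the cut of X lies in S: this
   contradicts [join_cut3_trivial]. *)
Theorem mainTheorem4 (V E : finType) (src tgt : E -> V) (e1 e2 : E)
    (a b c d : V) (t : nat) :
  loopless src tgt -> cubic src tgt -> cyc4ec src tgt ->
  ((src e1 = a /\ tgt e1 = b) \/ (src e1 = b /\ tgt e1 = a)) ->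
  ((src e2 = c /\ tgt e2 = d) \/ (src e2 = d /\ tgt e2 = c)) ->
  uniq [:: a; b; c; d] ->
  2 <= t ->
  cyc4ec (@join_src V E src tgt e1 e2 a b c d t)
         (@join_tgt V E src tgt e1 e2 a b c d t).
Proof.
move=> loopless_G cubic_G cyc4ec_G ends_e1 ends_e2 abcd_uniq t_gt1 S S_lt4 [u [v [uv cyc_u cyc_v]]].
set hsrc := @join_src V E src tgt e1 e2 a b c d t.
set htgt := @join_tgt V E src tgt e1 e2 a b c d t.
set X := [set w | connect (adj_minus hsrc htgt S) u w].
have loopless_H : loopless hsrc htgt by apply: join_loopless.
have cut_X : #|cut hsrc htgt X| <= 3.
  have cut_sub : cut hsrc htgt X \subset S by apply: cut_component.
  by have := subset_leq_card cut_sub; lia.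
have comp_u : 1 < #|X| := comp_cycle_two loopless_H cyc_u.
have comp_v := comp_cycle_two loopless_H cyc_v.
have comp_v_sub : [set w | connect (adj_minus hsrc htgt S) v w] \subset ~: X.
  apply/subsetP => w; rewrite !inE => vw; apply: contra uv => uw.
  by apply: connect_trans uw _; rewrite (sym_connect_sym (adj_minus_sym _ _ S)).
have := subset_leq_card comp_v_sub.
by case: (join_cut3_trivial loopless_G cubic_G cyc4ec_G ends_e1 ends_e2 abcd_uniq t_gt1 cut_X); lia.
Qed.
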